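(* Let $A$ be a finite set of options and consider $V\ge1$ votes, each a truncated ranking with possible ties, interpreted as in the context, with associated Llull matrix $v$ and path scores $v^*$. Let $x,y\in A$ be distinct and assume $x$ dominates $y$ in the sense of Pareto. Then for every $a\in A\setminus\{x,y\}$: $v_{xa}\ge v_{ya}$, $v_{ay}\ge v_{ax}$, $v^*_{xa}\ge v^*_{ya}$, $v^*_{ay}\ge v^*_{ax}$; and moreover $v^*_{xy}\ge v^*_{yx}$.
   Context: A truncated ranking with ties is a weak order on a subset $R$ of $A$ (the ranked options). It is interpreted as follows: for ranked options, $x$ is preferred to $y$ if $x$ is strictly above $y$, and $x,y$ are ranked equally if they are tied; every ranked option is preferred to every unranked option; no comparison is made between two unranked options. The Llull matrix is $v_{xy}=(\#\{\text{votes preferring }x\text{ to }y\}+\tfrac12\#\{\text{votes ranking }x,y\text{ equally}\})/V$. Path scores: $v^*_{xy}=\max\min(v_{x_0x_1},\dots,v_{x_{m-1}x_m})$ over all paths $x_0\dots x_m$ ($m\ge1$, $x_0=x$, $x_m=y$, $x_i$ pairwise distinct). $x$ dominates $y$ in the sense of Pareto if every vote (as interpreted) either prefers $x$ to $y$ or ranks $x$ and $y$ equally, and at least one vote prefers $x$ to $y$. *)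

From mathcomp Require Import all_boot all_order all_algebra.
Set Implicit Arguments. Unset Strict Implicit. Unset Printing Implicit Defensive.
Import Order.TTheory GRing.Theory Num.Theory.
Local Open Scope ring_scope.

(* A truncated ranking with ties on the options A is encoded as a level map
   b : A -> option nat : [Some k] means "ranked at level k" (smaller level =
   higher position; equal levels = tied), [None] means "unranked".  Every weak
   order on a subset R of a finite A arises this way (and conversely). *)
Definition ranking (A : finType) := A -> option nat.

Definition prefers (A : finType) (b : ranking A) (x y : A) : bool :=
  match b x, b y with
  | Some i, Some j => (i < j)%N
  | Some _, None => true
  | _, _ => false
  end.

Definition ranked_equally (A : finType) (b : ranking A) (x y : A) : bool :=
  match b x, b y with
  | Some i, Some j => i == j
  | _, _ => false
  end.

Definition llull (A : finType) (V : nat) (b : 'I_V -> ranking A) (x y : A) : rat :=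
  ((#|[set i | prefers (b i) x y]|)%:R
    + (#|[set i | ranked_equally (b i) x y]|)%:R / 2) / V%:R.

(* min of v along the path x, p_1, ..., p_m  (only used for p nonempty) *)
Fixpoint path_min (A : finType) (v : A -> A -> rat) (x : A) (p : seq A) : rat :=
  match p with
  | [::] => 1
  | [:: y] => v x y
  | y :: p' => Num.min (v x y) (path_min v y p')
  end.

Definition is_path_from_to (A : finType) (x y : A) (p : seq A) : bool :=
  [&& (0 < size p)%N, uniq (x :: p) & last x p == y].

(* Simple paths have at most #|A| vertices, so t ranges over tuples of length
   n <= #|A|.  All values are >= 0, so 0 is a neutral default (the set of
   paths is nonempty when x <> y). *)
Definition path_score (A : finType) (v : A -> A -> rat) (x y : A) : rat :=
  \big[Num.max/0]_(n < #|A|.+1)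
    \big[Num.max/0]_(t : n.-tuple A | is_path_from_to x y t) path_min v x t.

Definition pareto_dominates (A : finType) (V : nat) (b : 'I_V -> ranking A)
  (x y : A) : Prop :=
  (forall i, prefers (b i) x y || ranked_equally (b i) x y) /\
  (exists i, prefers (b i) x y).

From mathcomp Require Import all_boot all_order all_algebra all_fingroup.
From mathcomp Require Import lra.
Import Order.TTheory GRing.Theory Num.Theory.
Local Open Scope ring_scope.
Set Implicit Arguments. Unset Strict Implicit.

(* In every vote x stands at least as high as y, so replacing y by x as the
   winner of a comparison, or x by y as its loser, can only increase the
   Llull score: v_ya <= v_xa and v_ax <= v_ay.  Hence the transposition (x y)
   does not decrease the score of any edge u -> w with u <> x and w <> y.
   A simple path from y to a either passes through x, and then its tail is a
   path from x to a with no smaller minimum, or it avoids x, and then its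
   image under (x y) is such a path.  The inequalities v*_ax <= v*_ay and
   v*_yx <= v*_xy follow in the same way. *)

Definition level_score (i k : nat) : rat := (i < k)%N%:R + (i == k)%:R / 2.

Lemma level_score_ge0 i k : 0 <= level_score i k.
Proof. by rewrite /level_score; case: (i < k)%N; case: (i == k) => /=; lra. Qed.

Lemma level_score_le1 i k : level_score i k <= 1.
Proof. by rewrite /level_score; case: ltngtP => /= _; lra. Qed.

Lemma level_score_monoL i j k : (i <= j)%N -> level_score j k <= level_score i k.
Proof.
rewrite /level_score => le_ij; case: (ltngtP j k) => [lt_jk|lt_kj|<-].
- by have lt_ik := leq_ltn_trans le_ij lt_jk; rewrite lt_ik (ltn_eqF lt_ik) lexx.
- by case: (i < k)%N; case: (i == k) => /=; lra.
- by case: ltngtP le_ij => //= _ _; lra.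
Qed.

Lemma level_score_monoR i j k : (i <= j)%N -> level_score k i <= level_score k j.
Proof.
rewrite /level_score => le_ij; case: (ltngtP k i) => [lt_ki|lt_ik|->].
- by have lt_kj := leq_trans lt_ki le_ij; rewrite lt_kj (ltn_eqF lt_kj) lexx.
- by case: (k < j)%N; case: (k == j) => /=; lra.
- by case: ltngtP le_ij => //= _ _; lra.
Qed.

Section VoteScore.
Variable A : finType.

Definition vote_score (bi : ranking A) (u w : A) : rat :=
  (prefers bi u w)%:R + (ranked_equally bi u w)%:R / 2.

Lemma vote_scoreE (bi : ranking A) (u w : A) :
  vote_score bi u w =
    match bi u, bi w with
    | Some i, Some k => level_score i k
    | Some _, None => 1
    | None, _ => 0
    end.
Proof.
rewrite /vote_score /prefers /ranked_equally.
by case: (bi u) => [i|]; case: (bi w) => [k|] //=; rewrite mul0r ?addr0.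
Qed.

Lemma weak_pref_levels (bi : ranking A) (x y : A) :
  prefers bi x y || ranked_equally bi x y ->
  exists2 i, bi x = Some i & (bi y = None \/ exists2 j, bi y = Some j & (i <= j)%N).
Proof.
rewrite /prefers /ranked_equally.
case: (bi x) => [i|]; case: (bi y) => [j|] //= pref; exists i => //.
  by right; exists j => //; case/orP: pref => [/ltnW|/eqP->].
by left.
Qed.

Lemma vote_score_monoL (bi : ranking A) (x y a : A) :
  prefers bi x y || ranked_equally bi x y -> vote_score bi y a <= vote_score bi x a.
Proof.
case/weak_pref_levels=> i; rewrite !vote_scoreE => -> [-> | [j -> le_ij]].
  by case: (bi a) => [k|]; rewrite ?level_score_ge0 ?ler01.
by case: (bi a) => [k|]; rewrite ?level_score_monoL ?lexx.
Qed.

Lemma vote_score_monoR (bi : ranking A) (x y a : A) :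
  prefers bi x y || ranked_equally bi x y -> vote_score bi a x <= vote_score bi a y.
Proof.
case/weak_pref_levels=> i; rewrite !vote_scoreE => -> [-> | [j -> le_ij]].
  by case: (bi a) => [k|]; rewrite ?level_score_le1 ?lexx.
by case: (bi a) => [k|]; rewrite ?level_score_monoR ?lexx.
Qed.

Lemma llullE (V : nat) (b : 'I_V -> ranking A) (u w : A) :
  llull b u w = (\sum_i vote_score (b i) u w) / V%:R.
Proof.
have card_natr (P : pred 'I_V) : (#|[set i | P i]|)%:R = \sum_i ((P i)%:R : rat).
  rewrite -sum1_card natr_sum big_mkcond /=; apply: eq_bigr => i _.
  by rewrite inE; case: (P i).
by rewrite /llull /vote_score big_split /= -mulr_suml !card_natr.
Qed.

Lemma le_llull (V : nat) (b : 'I_V -> ranking A) (u w u' w' : A) :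
  (forall i, vote_score (b i) u w <= vote_score (b i) u' w') ->
  llull b u w <= llull b u' w'.
Proof.
move=> le_score; rewrite !llullE ler_wpM2r ?invr_ge0 ?ler0n //.
by apply: ler_sum => i _.
Qed.

End VoteScore.

Lemma le_bigmax0_seq (R : realDomainType) (I : eqType) (r : seq I) (P : pred I) (F : I -> R) i :
  i \in r -> P i -> F i <= \big[Num.max/0]_(j <- r | P j) F j.
Proof.
elim: r => // j r IH; rewrite inE big_cons => /orP [/eqP <- | ir] Pi.
  by rewrite Pi le_max lexx.
by case: (P j); rewrite ?le_max IH ?orbT.
Qed.

Lemma bigmax0_le (R : realDomainType) (I : Type) (r : seq I) (P : pred I) (F : I -> R) c :
  0 <= c -> (forall i, P i -> F i <= c) -> \big[Num.max/0]_(j <- r | P j) F j <= c.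
Proof. by move=> c_ge0 leFc; elim/big_ind: _ => // m n; rewrite ge_max => -> ->. Qed.

Lemma bigmax0_ge0 (R : realDomainType) (I : Type) (r : seq I) (P : pred I) (F : I -> R) :
  0 <= \big[Num.max/0]_(j <- r | P j) F j.
Proof. by elim/big_rec: _ => // j m _ m_ge0; rewrite le_max m_ge0 orbT. Qed.

Section PathScore.
Variables (A : finType) (v : A -> A -> rat).

Lemma path_min_cons u w s :
  s != [::] -> path_min v u (w :: s) = Num.min (v u w) (path_min v w s).
Proof. by case: s. Qed.

Lemma path_score_ge0 u w : 0 <= path_score v u w.
Proof. exact: bigmax0_ge0. Qed.

Lemma path_score_ge u w p : is_path_from_to u w p -> path_min v u p <= path_score v u w.
Proof.
move=> path_p; have /and3P[_ uniq_p _] := path_p.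
have size_p : (size p < #|A|.+1)%N.
  by rewrite ltnS ltnW // -[(size p).+1]/(size (u :: p)) -(card_uniqP uniq_p) max_card.
apply: le_trans (le_bigmax0_seq (P := xpredT)
  (fun n : 'I_#|A|.+1 => \big[Num.max/0]_(t : n.-tuple A | is_path_from_to u w t) path_min v u t)
  (mem_index_enum (Ordinal size_p)) isT).
exact: (le_bigmax0_seq (fun t : (size p).-tuple A => path_min v u t)
  (mem_index_enum (in_tuple p))).
Qed.

Lemma path_score_le u w c :
  0 <= c -> (forall p, is_path_from_to u w p -> path_min v u p <= c) ->
  path_score v u w <= c.
Proof. by move=> c_ge0 le_pc; do 2![apply: bigmax0_le => // ? ?]; exact: le_pc. Qed.

Lemma path_min_suffix p1 z q u :
  q != [::] -> path_min v u (p1 ++ z :: q) <= path_min v z q.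
Proof.
move=> q_nil; elim: p1 u => [|w p1 IH] u.
  by rewrite path_min_cons // ge_min lexx orbT.
by rewrite cat_cons path_min_cons ?ge_min ?IH ?orbT //; case: p1 {IH}.
Qed.

Lemma path_min_prefix p1 q u :
  p1 != [::] -> path_min v u (p1 ++ q) <= path_min v u p1.
Proof.
elim: p1 u => [|w [|w' p1] IH] u // _.
  by case: q {IH} => //= *; rewrite ge_min lexx.
by rewrite cat_cons path_min_cons // [X in _ <= X]path_min_cons // le_min !ge_min lexx IH ?orbT.
Qed.

Lemma path_score_ge_suffix u w p1 z q :
  is_path_from_to u w (p1 ++ z :: q) -> z != w ->
  path_min v u (p1 ++ z :: q) <= path_score v z w.
Proof.
case/and3P=> _ uniq_p last_p neq_zw.
have q_nil : q != [::] by apply: contraNneq neq_zw => q0; move: last_p; rewrite q0 last_cat.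
apply: le_trans (path_min_suffix _ _ _ q_nil) (path_score_ge _).
apply/and3P; split; first by case: (q) q_nil.
  by move: uniq_p; rewrite -cat_cons cat_uniq => /and3P[_ _].
by move: last_p; rewrite last_cat.
Qed.

Lemma path_score_ge_prefix u w p1 z q :
  is_path_from_to u w (p1 ++ z :: q) -> path_min v u (p1 ++ z :: q) <= path_score v u z.
Proof.
case/and3P=> _ uniq_p _; rewrite -cat_rcons.
apply: le_trans (path_min_prefix _ _ _) (path_score_ge _); first by rewrite -size_eq0 size_rcons.
apply/and3P; split; rewrite ?size_rcons ?last_rcons //.
by move: uniq_p; rewrite -cat_rcons -cat_cons cat_uniq => /andP[].
Qed.

Lemma path_min_map (f : A -> A) u p :
  (forall a c, a \in belast u p -> c \in p -> v a c <= v (f a) (f c)) ->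
  path_min v u p <= path_min v (f u) (map f p).
Proof.
elim: p u => [|w p IH] u // le_edge.
have le_uw : v u w <= v (f u) (f w) by apply: le_edge; rewrite ?inE eqxx.
have le_rest : path_min v w p <= path_min v (f w) (map f p).
  by apply: IH => a c a_p c_p; apply: le_edge; rewrite !inE ?a_p ?c_p orbT.
case: p {IH le_edge} le_rest => [|w' p] //= le_rest.
by rewrite le_min !ge_min le_uw le_rest orbT.
Qed.

Lemma is_path_perm (s : {perm A}) u w p :
  is_path_from_to u w p -> is_path_from_to (s u) (s w) (map s p).
Proof.
case/and3P=> size_p uniq_p /eqP last_p.
by rewrite /is_path_from_to size_map size_p -map_cons (map_inj_uniq (@perm_inj _ _))
  uniq_p last_map last_p eqxx.
Qed.

Lemma path_source_notin (u w : A) p : is_path_from_to u w p -> u \notin p.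
Proof. by case/and3P=> _ /andP[]. Qed.

Lemma path_target_notin_belast (u w : A) p : is_path_from_to u w p -> w \notin belast u p.
Proof.
by case/and3P=> _ uniq_p /eqP last_p; move: uniq_p; rewrite lastI rcons_uniq last_p => /andP[].
Qed.

End PathScore.

Section ParetoDominance.
Variables (A : finType) (V : nat) (b : 'I_V -> ranking A) (x y : A).
Hypothesis neq_xy : x != y.
Hypothesis weak_dom : forall i, prefers (b i) x y || ranked_equally (b i) x y.

Let v := llull b.

Lemma llull_monoL a : v y a <= v x a.
Proof. by apply: le_llull => i; apply: vote_score_monoL. Qed.

Lemma llull_monoR a : v a x <= v a y.
Proof. by apply: le_llull => i; apply: vote_score_monoR. Qed.

Lemma llull_le_tperm u w : u != x -> w != y -> v u w <= v (tperm x y u) (tperm x y w).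
Proof.
move=> neq_ux neq_wy; have [-> | neq_uy] := eqVneq u y.
  rewrite tpermR; have [-> | neq_wx] := eqVneq w x.
    by rewrite tpermL; apply: le_trans (llull_monoL x) (llull_monoR x).
  by rewrite tpermD 1?eq_sym ?llull_monoL.
rewrite [tperm x y u]tpermD 1?eq_sym //; have [-> | neq_wx] := eqVneq w x.
  by rewrite tpermL llull_monoR.
by rewrite tpermD // eq_sym.
Qed.

Lemma path_min_le_tperm_score u w p :
  is_path_from_to u w p -> x \notin belast u p -> y \notin p ->
  path_min v u p <= path_score v (tperm x y u) (tperm x y w).
Proof.
move=> path_p x_nb y_np; apply: le_trans (path_score_ge _ (is_path_perm _ path_p)).
apply: path_min_map => a c a_b c_p; apply: llull_le_tperm.
  by apply: contraNneq x_nb => <-.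
by apply: contraNneq y_np => <-.
Qed.

Lemma path_score_monoL a : a != x -> a != y -> path_score v y a <= path_score v x a.
Proof.
move=> neq_ax neq_ay; apply: path_score_le => [|p path_p]; first exact: path_score_ge0.
have [x_p | x_np] := boolP (x \in p).
  by case/splitPr: x_p path_p => p1 p2 /path_score_ge_suffix->; rewrite // eq_sym.
apply: le_trans (path_min_le_tperm_score path_p _ (path_source_notin path_p)) _.
  by apply: contra x_np => /mem_belast; rewrite inE (negPf neq_xy).
by rewrite tpermR tpermD // eq_sym.
Qed.

Lemma path_score_monoR a : a != x -> a != y -> path_score v a x <= path_score v a y.
Proof.
move=> neq_ax neq_ay; apply: path_score_le => [|p path_p]; first exact: path_score_ge0.
have [y_p | y_np] := boolP (y \in p).
  by case/splitPr: y_p path_p => p1 p2 /path_score_ge_prefix.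
apply: le_trans (path_min_le_tperm_score path_p (path_target_notin_belast path_p) y_np) _.
by rewrite tpermL tpermD // eq_sym.
Qed.

Lemma path_score_pareto : path_score v y x <= path_score v x y.
Proof.
apply: path_score_le => [|p path_p]; first exact: path_score_ge0.
apply: le_trans (path_min_le_tperm_score path_p (path_target_notin_belast path_p)
  (path_source_notin path_p)) _.
by rewrite tpermR tpermL.
Qed.

End ParetoDominance.

Theorem proposition4p1 (A : finType) (V : nat) (b : 'I_V -> ranking A) (x y : A) :
  (0 < V)%N -> x != y -> pareto_dominates b x y ->
  (forall a : A, a != x -> a != y ->
     [/\ llull b y a <= llull b x a,
         llull b a x <= llull b a y,
         path_score (llull b) y a <= path_score (llull b) x a &
         path_score (llull b) a x <= path_score (llull b) a y]) /\
  path_score (llull b) y x <= path_score (llull b) x y.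
Proof.
move=> _ neq_xy [weak_dom _]; split; last exact: path_score_pareto.
move=> a neq_ax neq_ay; split.
- exact: llull_monoL.
- exact: llull_monoR.
- exact: path_score_monoL.
- exact: path_score_monoR.
Qed.
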